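(* Let $\mathbb X,\mathbb Y,\mathbb X^\sharp,\mathbb Y^\sharp$ be sets, $c:\mathbb X\times\mathbb X^\sharp\to\overline{\mathbb R}$ and $d:\mathbb Y\times\mathbb Y^\sharp\to\overline{\mathbb R}$ couplings, $E:\mathbb X\times\mathbb Y^\sharp\to\overline{\mathbb R}$ and $K:\mathbb X\times\mathbb Y\to\overline{\mathbb R}$. If $$K(x,y)\ge\sup_{y^\sharp\in\mathbb Y^\sharp}\big(d(y,y^\sharp)\mathbin{\underset{\cdot}{+}} E(x,y^\sharp)\big)\quad\text{for all }(x,y)\in\mathbb X\times\mathbb Y,$$ then $$K^{c\mathbin{\underset{\cdot}{+}} d}(x^\sharp,y^\sharp)\le\sup_{x\in\mathbb X}\big(c(x,x^\sharp)\mathbin{\underset{\cdot}{+}}(-E(x,y^\sharp))\big)\quad\text{for all }(x^\sharp,y^\sharp)\in\mathbb X^\sharp\times\mathbb Y^\sharp.$$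
   Context: $\overline{\mathbb R}=[-\infty,+\infty]$. The Moreau lower addition $\mathbin{\underset{\cdot}{+}}$ is usual addition extended by $(+\infty)\mathbin{\underset{\cdot}{+}}(-\infty)=(-\infty)\mathbin{\underset{\cdot}{+}}(+\infty)=-\infty$. $K^{c\mathbin{\underset{\cdot}{+}} d}(x^\sharp,y^\sharp)=\sup_{x\in\mathbb X,y\in\mathbb Y}\big(c(x,x^\sharp)\mathbin{\underset{\cdot}{+}} d(y,y^\sharp)\mathbin{\underset{\cdot}{+}}(-K(x,y))\big)$. *)

From HB Require Import structures.
From mathcomp Require Import all_boot all_order all_algebra.
From mathcomp Require Import all_classical all_reals all_analysis.
Set Implicit Arguments. Unset Strict Implicit. Unset Printing Implicit Defensive.
Import Order.TTheory GRing.Theory Num.Theory.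
Local Open Scope classical_set_scope.
Local Open Scope ereal_scope.

(* Moreau lower addition on \bar R is mathcomp's [adde] ( -oo + +oo = -oo ).
   K^{c +. d}(xs, ys) = sup_{x,y} (c x xs + d y ys + (- K x y)). *)
Definition coupling_conj (R : realType) (X Y Xs Ys : Type)
  (c : X -> Xs -> \bar R) (d : Y -> Ys -> \bar R) (K : X -> Y -> \bar R)
  (xs : Xs) (ys : Ys) : \bar R :=
  ereal_sup [set (c xy.1 xs + d xy.2 ys) + - K xy.1 xy.2 | xy in [set: X * Y]].

From HB Require Import structures.
From mathcomp Require Import all_boot all_order all_algebra.
From mathcomp Require Import all_classical all_reals all_analysis.
From mathcomp Require Import lra.
Import Order.TTheory GRing.Theory Num.Theory.
Local Open Scope classical_set_scope.
Local Open Scope ereal_scope.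

(* Each term [c x xs + d y ys - K x y] of the conjugate is bounded by
   [c x xs - E x ys], because [d y ys + E x ys <= K x y] can be transposed to
   [d y ys - K x y <= - E x ys]; with the lower addition this transposition
   holds for all extended reals, infinities included. *)

Lemma leeD_subN (R : realDomainType) (a b k : \bar R) :
  a + b <= k -> a - k <= - b.
Proof.
case: a b k => [a| |] [b| |] [k| |] //=; rewrite ?leey ?leNye //.
by rewrite -!EFinD !lee_fin; lra.
Qed.

Theorem lemma1 (R : realType) (X Y Xs Ys : Type)
  (c : X -> Xs -> \bar R) (d : Y -> Ys -> \bar R)
  (E : X -> Ys -> \bar R) (K : X -> Y -> \bar R) :
  (forall (x : X) (y : Y),
     ereal_sup [set d y ys + E x ys | ys in [set: Ys]] <= K x y) ->
  forall (xs : Xs) (ys : Ys),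
    coupling_conj c d K xs ys <= ereal_sup [set c x xs + - E x ys | x in [set: X]].
Proof.
move=> KE xs ys; apply: ge_ereal_sup => _ [[x y] _ <-] /=.
have dEK : d y ys + E x ys <= K x y.
  by apply: le_trans (KE x y); apply: ereal_sup_ubound; exists ys.
apply: le_trans (_ : c x xs - E x ys <= _); last first.
  by apply: ereal_sup_ubound; exists x.
by rewrite -addeA leeD2l // leeD_subN.
Qed.
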